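(* For every density operator $\rho$ on $\mathbb{C}^d$, $$\overline{C}_{\mathcal{R}}(\rho)=\max_{\Lambda\in\mathrm{GIO}}F\big(\Lambda(\rho),|\phi^+\rangle\langle\phi^+|\big),$$ where $F(\rho,\sigma)=\left(\mathrm{tr}\sqrt{\rho^{1/2}\sigma\rho^{1/2}}\right)^2$ is the fidelity (so that the right-hand side equals $\max_{\Lambda\in\mathrm{GIO}}\langle\phi^+|\Lambda(\rho)|\phi^+\rangle$).
   Context: Fix the computational basis $\{|i\rangle\}_{i=0}^{d-1}$ of $\mathbb{C}^d$ as the incoherent basis; $\mathcal{I}$ denotes the set of density operators diagonal in this basis. Let $|\phi^+\rangle=\frac{1}{\sqrt d}\sum_{i=0}^{d-1}|i\rangle$. The robustness of coherence is $C_{\mathcal{R}}(\rho)=\min\{s\ge0: \exists\text{ density operator }\tau,\ (\rho+s\tau)/(1+s)\in\mathcal{I}\}$ and $\overline{C}_{\mathcal{R}}(\rho)=(1+C_{\mathcal{R}}(\rho))/d$. A genuinely incoherent operation (GIO) is a quantum channel (completely positive trace-preserving map) $\Lambda$ on $d\times d$ matrices with $\Lambda(|i\rangle\langle i|)=|i\rangle\langle i|$ for all $i$; equivalently, $\Lambda(\rho)=\tau\circ\rho$ (entrywise/Schur product) for some positive semidefinite matrix $\tau$ with all diagonal entries equal to $1$ (a correlation matrix). *)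

From mathcomp Require Import all_boot all_algebra.
From mathcomp Require Import reals.
From mathcomp.real_closed Require Import complex.
From Stdlib Require Import ClassicalEpsilon.

Set Implicit Arguments.
Unset Strict Implicit.
Unset Printing Implicit Defensive.

Import GRing.Theory Num.Theory.
Local Open Scope ring_scope.

Section QDefs.
Variable C : numClosedFieldType.

Definition adjmx m n (A : 'M[C]_(m, n)) : 'M[C]_(n, m) := (map_mx Num.conj A)^T.

Definition psd n (A : 'M[C]_n) : Prop :=
  forall v : 'cV[C]_n, 0 <= (adjmx v *m A *m v) 0 0.

Definition density n (rho : 'M[C]_n) : Prop := psd rho /\ \tr rho = 1.

Definition incoherent n (rho : 'M[C]_n) : Prop := density rho /\ is_diag_mx rho.

Definition robustness_feasible n (rho : 'M[C]_n) (s : C) : Prop :=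
  0 <= s /\ exists tau : 'M[C]_n,
    density tau /\ incoherent ((1 + s)^-1 *: (rho + s *: tau)).

Definition is_robustness n (rho : 'M[C]_n) (s : C) : Prop :=
  robustness_feasible rho s /\ forall s', robustness_feasible rho s' -> s <= s'.

Definition normalized_robustness n (s : C) : C := (1 + s) / n%:R.

Definition phi_plus n : 'cV[C]_n := \col_(i < n) (sqrtC (n%:R))^-1.
Definition Phi_plus n : 'M[C]_n := phi_plus n *m adjmx (phi_plus n).

Definition sqrtm n (A : 'M[C]_n) : 'M[C]_n :=
  epsilon (inhabits 0) (fun B : 'M[C]_n => psd B /\ B *m B = A).

Definition fidelity n (rho sigma : 'M[C]_n) : C :=
  (\tr (sqrtm (sqrtm rho *m sigma *m sqrtm rho))) ^+ 2.

(* positivity of an element of M_k (x) M_n, written as a k x k block matrix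
   with blocks B i j : 'M_n *)
Definition block_psd k n (B : 'I_k -> 'I_k -> 'M[C]_n) : Prop :=
  forall v : 'I_k -> 'cV[C]_n,
    0 <= \sum_(i < k) \sum_(j < k) (adjmx (v i) *m B i j *m v j) 0 0.

Definition linear_map n (L : 'M[C]_n -> 'M[C]_n) : Prop :=
  forall (a : C) (X Y : 'M[C]_n), L (a *: X + Y) = a *: L X + L Y.

(* complete positivity: id_k (x) L is positive for every k *)
Definition completely_positive n (L : 'M[C]_n -> 'M[C]_n) : Prop :=
  forall k (B : 'I_k -> 'I_k -> 'M[C]_n),
    block_psd B -> block_psd (fun i j => L (B i j)).

Definition trace_preserving n (L : 'M[C]_n -> 'M[C]_n) : Prop :=
  forall X, \tr (L X) = \tr X.

Definition quantum_channel n (L : 'M[C]_n -> 'M[C]_n) : Prop :=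
  [/\ linear_map L, completely_positive L & trace_preserving L].

Definition GIO n (L : 'M[C]_n -> 'M[C]_n) : Prop :=
  quantum_channel L /\ forall i : 'I_n, L (delta_mx i i) = delta_mx i i.

End QDefs.

(* With the diagonal Kraus operators built from the columns of [U], the channel
   [schur_channel U] multiplies entrywise by the Gram matrix [S = U U^*]; if the
   rows of [U] are unit vectors it is a GIO, and
   [<phi+| S o rho |phi+> = (\sum_ij S_ij rho_ij) / d].
   Weak duality: a GIO fixes every diagonal [D], so [D >= rho] gives
   [<phi+| L rho |phi+> <= <phi+| D |phi+> = tr D / d], while the feasible [s] of
   the robustness are exactly the [tr D - 1] for diagonal [D >= rho].
   Strong duality: the matrices with unit rows form a compact set, so some [U]
   maximises [Re (\sum_ij S_ij rho_ij)].  Replacing [S] by [A S A + t beta beta^*],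
   with [A = diag (sqrt (1 - t |c_i|^2))] and [beta = sqrt t * conj c], keeps the
   diagonal equal to one, and the first-order condition in [t] says that
   [D = diag (\sum_j Re (S_ij rho_ij))] satisfies [D >= rho]; its trace is the
   optimal value.  Finally [F (sigma, |phi><phi|) = <phi| sigma |phi>]. *)

From mathcomp Require Import all_boot all_order all_algebra.
From mathcomp Require Import reals.
From mathcomp.real_closed Require Import complex.
From Stdlib Require Import ClassicalEpsilon.
From mathcomp Require Import lra ring.
From mathcomp Require Import boolp classical_sets topology normedtype derive.
Import Order.TTheory GRing.Theory Num.Theory numFieldNormedType.Exports.

Set Implicit Arguments.
Unset Strict Implicit.
Unset Printing Implicit Defensive.
Local Open Scope ring_scope.

Section Adjoint.
Variable C : numClosedFieldType.

Lemma adjmxE m n (A : 'M[C]_(m, n)) i j : adjmx A i j = (A j i)^*.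
Proof. by rewrite !mxE. Qed.

Lemma adjmxK m n (A : 'M[C]_(m, n)) : adjmx (adjmx A) = A.
Proof. by apply/matrixP => i j; rewrite !adjmxE conjCK. Qed.

Lemma adjmx_mul m n p (A : 'M[C]_(m, n)) (B : 'M[C]_(n, p)) :
  adjmx (A *m B) = adjmx B *m adjmx A.
Proof.
apply/matrixP => i j; rewrite adjmxE !mxE rmorph_sum; apply: eq_bigr => k _.
by rewrite !adjmxE rmorphM mulrC.
Qed.

Lemma adjmxD m n (A B : 'M[C]_(m, n)) : adjmx (A + B) = adjmx A + adjmx B.
Proof. by apply/matrixP => i j; rewrite !mxE rmorphD. Qed.

Lemma adjmxZ m n a (A : 'M[C]_(m, n)) : adjmx (a *: A) = a^* *: adjmx A.
Proof. by apply/matrixP => i j; rewrite !mxE rmorphM. Qed.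

Lemma adjmx_diag n (d : 'rV[C]_n) : adjmx (diag_mx d) = diag_mx (map_mx Num.conj d).
Proof.
apply/matrixP => i j; rewrite adjmxE !mxE eq_sym.
by case: eqP => [->|_]; rewrite ?mulr1n ?mulr0n ?conjC0.
Qed.

Lemma adjmx_tstar m n (A : 'M[C]_(m, n)) : adjmx A = (A ^t*)%sesqui.
Proof. by apply/matrixP => i j; rewrite !mxE. Qed.

Definition braket n (A : 'M[C]_n) (x y : 'cV[C]_n) : C := (adjmx x *m A *m y) 0 0.

Lemma braketE n (A : 'M[C]_n) x y :
  braket A x y = \sum_i \sum_j (x i 0)^* * A i j * y j 0.
Proof.
rewrite /braket mxE; under eq_bigr do rewrite mxE big_distrl /=.
by rewrite exchange_big; apply: eq_bigr => i _; apply: eq_bigr => j _; rewrite adjmxE.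
Qed.

Lemma braket_conj n (A : 'M[C]_n) x y : (braket A x y)^* = braket (adjmx A) y x.
Proof. by rewrite /braket -adjmxE !adjmx_mul adjmxK mulmxA. Qed.

Lemma braketDl n (A : 'M[C]_n) x y z : braket A (x + y) z = braket A x z + braket A y z.
Proof. by rewrite /braket adjmxD !mulmxDl mxE. Qed.

Lemma braketDr n (A : 'M[C]_n) x y z : braket A x (y + z) = braket A x y + braket A x z.
Proof. by rewrite /braket mulmxDr mxE. Qed.

Lemma braketZl n (A : 'M[C]_n) a x y : braket A (a *: x) y = a^* * braket A x y.
Proof. by rewrite /braket adjmxZ -!scalemxAl mxE. Qed.

Lemma braketZr n (A : 'M[C]_n) a x y : braket A x (a *: y) = a * braket A x y.
Proof. by rewrite /braket -scalemxAr mxE. Qed.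

Lemma braket_mxB n (A B : 'M[C]_n) x y : braket (A - B) x y = braket A x y - braket B x y.
Proof. by rewrite /braket mulmxBr mulmxBl !mxE. Qed.

Lemma braket_mx_sum n (I : Type) (r : seq I) (F : I -> 'M[C]_n) x y :
  braket (\sum_(l <- r) F l) x y = \sum_(l <- r) braket (F l) x y.
Proof. by rewrite /braket mulmx_sumr mulmx_suml summxE. Qed.

Lemma braket_congr m n (A : 'M[C]_(m, n)) (B : 'M[C]_n) x y :
  braket (A *m B *m adjmx A) x y = braket B (adjmx A *m x) (adjmx A *m y).
Proof. by rewrite /braket adjmx_mul adjmxK !mulmxA. Qed.

Lemma braket_delta n (A : 'M[C]_n) i j : braket A (delta_mx i 0) (delta_mx j 0) = A i j.
Proof.
rewrite /braket; have -> : adjmx (delta_mx i 0 : 'cV[C]_n) = delta_mx 0 i.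
  by apply/matrixP => a b; rewrite adjmxE !mxE rmorph_nat andbC.
by rewrite -rowE -colE !mxE.
Qed.

(* Polarization: the entries [B i j] are recovered from the quadratic form at
   [e_i + e_j] and [e_i + 'i e_j]. *)
Lemma mx_braket_eq0 n (B : 'M[C]_n) : (forall v, braket B v v = 0) -> B = 0.
Proof.
move=> B0; apply/matrixP => i j; rewrite mxE.
have h1 := B0 (delta_mx i 0 + delta_mx j 0).
have h2 := B0 (delta_mx i 0 + 'i *: delta_mx j 0).
rewrite !braketDl !braketDr !B0 !braket_delta add0r addr0 in h1.
rewrite !braketDl !braketDr !braketZl !braketZr !B0 !braket_delta conjCi in h2.
rewrite !mulr0 addr0 add0r in h2.
have Bji : B j i = - B i j by apply/eqP; rewrite -addr_eq0 addrC h1.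
rewrite Bji mulrN mulNr opprK -mulrDr in h2.
move/eqP: h2; rewrite mulf_eq0 (negbTE (neq0Ci C)) /= -mulr2n mulrn_eq0 /=.
by move/eqP.
Qed.

Lemma psd_herm n (A : 'M[C]_n) : psd A -> adjmx A = A.
Proof.
move=> A_psd; apply/eqP; rewrite -subr_eq0; apply/eqP; apply: mx_braket_eq0 => v.
by rewrite braket_mxB -braket_conj conj_Creal ?subrr //; exact: ger0_real (A_psd v).
Qed.

Lemma braket_diag n (d : 'rV[C]_n) x y :
  braket (diag_mx d) x y = \sum_i (x i 0)^* * d 0 i * y i 0.
Proof.
rewrite braketE; apply: eq_bigr => i _; rewrite (bigD1 i) //= big1 => [|j ji].
  by rewrite !mxE eqxx mulr1n addr0.
by rewrite !mxE eq_sym (negbTE ji) mulr0n mulr0 mul0r.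
Qed.

Lemma psd_spectral n (A : 'M[C]_n) : psd A -> exists P : 'M[C]_n, exists mu : 'rV[C]_n,
  [/\ P *m adjmx P = 1%:M, adjmx P *m P = 1%:M, forall i, 0 <= mu 0 i &
      A = adjmx P *m diag_mx mu *m P].
Proof.
move=> A_psd; have A_herm := psd_herm A_psd.
have /orthomx_spectralP : A \is normalmx by apply/normalmxP; rewrite -!adjmx_tstar A_herm.
set P := spectralmx A; set mu := spectral_diag A => eA.
have PPt : P *m adjmx P = 1%:M by rewrite adjmx_tstar; apply/unitarymxP; exact: spectral_unitarymx.
have iP : invmx P = adjmx P by rewrite adjmx_tstar invmx_unitary // spectral_unitarymx.
have PtP : adjmx P *m P = 1%:M by rewrite -iP mulVmx // spectral_unit.
rewrite iP in eA; exists P, mu; split => // i.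
have <- : braket A (adjmx P *m delta_mx i 0) (adjmx P *m delta_mx i 0) = mu 0 i.
  by rewrite -braket_congr eA !mulmxA PPt mul1mx -!mulmxA PPt mulmx1 braket_delta
       mxE eqxx mulr1n.
exact: A_psd.
Qed.

Lemma psd_congr m n (A : 'M[C]_(m, n)) (X : 'M[C]_n) : psd X -> psd (A *m X *m adjmx A).
Proof. by move=> X_psd v; rewrite -/(braket _ v v) braket_congr; exact: X_psd. Qed.

Lemma psd1 n : psd (1%:M : 'M[C]_n).
Proof.
move=> v; rewrite -/(braket _ v v) -diag_const_mx braket_diag.
by apply: sumr_ge0 => i _; rewrite mxE mulr1 mulrC mul_conjC_ge0.
Qed.

Lemma psd_gram m n (V : 'M[C]_(n, m)) : psd (V *m adjmx V).
Proof. by rewrite -{1}[V]mulmx1; apply: psd_congr; exact: psd1. Qed.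

Lemma psdD n (X Y : 'M[C]_n) : psd X -> psd Y -> psd (X + Y).
Proof. by move=> X_psd Y_psd v; rewrite mulmxDr mulmxDl mxE addr_ge0. Qed.

Lemma psdZ n a (X : 'M[C]_n) : 0 <= a -> psd X -> psd (a *: X).
Proof. by move=> a_ge0 X_psd v; rewrite -scalemxAr -scalemxAl mxE mulr_ge0. Qed.

Lemma psd_diag_ge0 n (X : 'M[C]_n) i : psd X -> 0 <= X i i.
Proof. by move=> X_psd; rewrite -braket_delta; exact: X_psd. Qed.

Lemma psd_tr_ge0 n (X : 'M[C]_n) : psd X -> 0 <= \tr X.
Proof. by move=> X_psd; apply: sumr_ge0 => i _; exact: psd_diag_ge0. Qed.

Lemma psd_tr_eq0 n (X : 'M[C]_n) : psd X -> \tr X = 0 -> X = 0.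
Proof.
move=> /psd_spectral[P [mu [PPt _ mu_ge0 ->]]].
rewrite mxtrace_mulC mulmxA PPt mul1mx mxtrace_diag => /psumr_eq0P mu0.
suff -> : diag_mx mu = 0 by rewrite mulmx0 mul0mx.
by apply/matrixP => i j; rewrite !mxE mu0 ?mul0rn.
Qed.

Lemma psd_sqrt_exists n (A : 'M[C]_n) : psd A -> exists B, psd B /\ B *m B = A.
Proof.
move=> /psd_spectral[P [mu [PPt _ mu_ge0 ->]]].
exists (adjmx P *m diag_mx (map_mx sqrtC mu) *m P); split.
  by rewrite -[P in _ *m P]adjmxK; apply: psd_congr => v;
     rewrite -/(braket _ v v) braket_diag; apply: sumr_ge0 => i _;
     rewrite mxE mulrC mulrA mulr_ge0 ?sqrtC_ge0 // mul_conjC_ge0.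
rewrite !mulmxA -(mulmxA _ P) PPt mulmx1 -(mulmxA (adjmx P)) mulmx_diag.
by congr (_ *m diag_mx _ *m _); apply/rowP => j; rewrite !mxE -expr2 sqrtCK.
Qed.

Lemma sqrtm_psd n (A : 'M[C]_n) : psd A -> psd (sqrtm A) /\ sqrtm A *m sqrtm A = A.
Proof. by move=> A_psd; exact: (epsilon_spec (inhabits 0) _ (psd_sqrt_exists A_psd)). Qed.

Lemma sqr_sum_pairwise0 (R : pzSemiRingType) n (a : 'I_n -> R) :
  (forall i j, i != j -> a i * a j = 0) -> (\sum_i a i) ^+ 2 = \sum_i a i ^+ 2.
Proof.
move=> a0; rewrite expr2 big_distrl /=; apply: eq_bigr => i _.
by rewrite big_distrr (bigD1 i) //= big1 ?addr0 // => j ji; rewrite a0 // eq_sym.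
Qed.

Lemma tr_sqrt_rank1 n (B : 'M[C]_n) (w : 'cV[C]_n) :
  psd B -> B *m B = w *m adjmx w -> (\tr B) ^+ 2 = (adjmx w *m w) 0 0.
Proof.
move=> /psd_spectral[P [mu [PPt PtP _ eB]]] BB; have [z zE] : {z | z = P *m w} by exists (P *m w).
have PBP : P *m B *m adjmx P = diag_mx mu.
  by rewrite eB !mulmxA PPt mul1mx -mulmxA PPt mulmx1.
have DD : diag_mx mu *m diag_mx mu = z *m adjmx z.
  rewrite -PBP !mulmxA -(mulmxA _ (adjmx P) P) PtP mulmx1 -(mulmxA P B B) BB.
  by rewrite zE adjmx_mul !mulmxA.
have DDij i j : mu 0 i * mu 0 i *+ (i == j) = z i 0 * (z j 0)^*.
  by have := congr1 (fun M : 'M[C]_n => M i j) DD; rewrite mulmx_diag !mxE big_ord1 adjmxE.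
have -> : \tr B = \sum_i mu 0 i.
  by rewrite eB mxtrace_mulC mulmxA PPt mul1mx mxtrace_diag.
have -> : (adjmx w *m w) 0 0 = \sum_i z i 0 * (z i 0)^*.
  have -> : adjmx w *m w = adjmx z *m z.
    by rewrite zE adjmx_mul mulmxA -(mulmxA _ (adjmx P)) PtP mulmx1.
  by rewrite mxE; apply: eq_bigr => i _; rewrite adjmxE mulrC.
(* [diag_mx mu ^+ 2 = z z^*] has rank one, so [mu i * mu j = 0] for [i != j]. *)
have Dii k : mu 0 k * mu 0 k = z k 0 * (z k 0)^* by rewrite -DDij eqxx mulr1n.
rewrite sqr_sum_pairwise0 => [|i j ij]; first by apply: eq_bigr => i _; rewrite expr2 Dii.
have sq0 : (mu 0 i * mu 0 j) ^+ 2 = 0.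
  by rewrite exprMn !expr2 !Dii [z j 0 * _]mulrC mulrACA -DDij (negbTE ij) mulr0n mul0r.
by move/eqP: sq0; rewrite expf_eq0 => /eqP.
Qed.

Lemma fidelity_rank1 n (X : 'M[C]_n) (w : 'cV[C]_n) :
  psd X -> fidelity X (w *m adjmx w) = braket X w w.
Proof.
move=> /sqrtm_psd[S_psd SS]; rewrite /fidelity; set S := sqrtm X in S_psd SS *.
have S_herm := psd_herm S_psd.
have -> : S *m (w *m adjmx w) *m S = (S *m w) *m adjmx (S *m w).
  by rewrite adjmx_mul S_herm !mulmxA.
have [T_psd TT] := sqrtm_psd (psd_gram (S *m w)).
by rewrite (tr_sqrt_rank1 T_psd TT) adjmx_mul S_herm /braket !mulmxA -(mulmxA _ S S) SS.
Qed.

End Adjoint.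

Section Channels.
Variables (C : numClosedFieldType) (n : nat).
Implicit Types (L : 'M[C]_n -> 'M[C]_n) (X Y D rho U : 'M[C]_n).

Lemma linear_map0 L : linear_map L -> L 0 = 0.
Proof.
move=> L_lin; have := L_lin 1 0 0; rewrite !scale1r addr0 => L00.
by apply: (addrI (L 0)); rewrite addr0 -L00.
Qed.

Lemma linear_mapD L X Y : linear_map L -> L (X + Y) = L X + L Y.
Proof. by move=> L_lin; rewrite -{1}(scale1r X) L_lin scale1r. Qed.

Lemma linear_mapZ L a X : linear_map L -> L (a *: X) = a *: L X.
Proof. by move=> L_lin; rewrite -(addr0 (a *: X)) L_lin linear_map0 // addr0. Qed.

Lemma linear_mapB L X Y : linear_map L -> L (X - Y) = L X - L Y.
Proof. by move=> L_lin; rewrite addrC -scaleN1r L_lin scaleN1r addrC. Qed.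

Lemma linear_map_sum L (I : Type) (r : seq I) (F : I -> 'M[C]_n) : linear_map L ->
  L (\sum_(i <- r) F i) = \sum_(i <- r) L (F i).
Proof.
move=> L_lin; elim/big_rec2: _ => [|i y1 y2 _ <-]; first exact: linear_map0.
exact: linear_mapD.
Qed.

Lemma GIO_diag L D : GIO L -> is_diag_mx D -> L D = D.
Proof.
move=> [[L_lin _ _] L_delta] /diag_mxP[d ->]; rewrite diag_mx_sum_delta.
by rewrite linear_map_sum //; apply: eq_bigr => i _; rewrite linear_mapZ // L_delta.
Qed.

Lemma completely_positive_psd L X : completely_positive L -> psd X -> psd (L X).
Proof.
move=> L_cp X_psd v.
have X1_psd : block_psd (fun _ _ : 'I_1 => X) by move=> w; rewrite !big_ord1; exact: X_psd.
by have := L_cp 1%N _ X1_psd (fun _ => v); rewrite !big_ord1.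
Qed.

Lemma braket_phi_plus X :
  braket X (phi_plus C n) (phi_plus C n) = (\sum_i \sum_j X i j) / n%:R.
Proof.
rewrite braketE mulr_suml; apply: eq_bigr => i _; rewrite mulr_suml.
apply: eq_bigr => j _; rewrite !mxE.
have c_ge0 : 0 <= (sqrtC (n%:R : C))^-1 by rewrite invr_ge0 sqrtC_ge0 ler0n.
by rewrite conj_Creal ?ger0_real // mulrC mulrA -expr2 exprVn sqrtCK mulrC.
Qed.

Lemma braket_phi_plus_diag D : is_diag_mx D ->
  braket D (phi_plus C n) (phi_plus C n) = \tr D / n%:R.
Proof.
move=> /is_diag_mxP D_diag; rewrite braket_phi_plus; congr (_ / _).
apply: eq_bigr => i _; rewrite (bigD1 i) //= big1 ?addr0 // => j ji.
by rewrite D_diag // eq_sym.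
Qed.

Lemma GIO_braket_phi_plus_le L D rho : GIO L -> is_diag_mx D -> psd (D - rho) ->
  braket (L rho) (phi_plus C n) (phi_plus C n) <= \tr D / n%:R.
Proof.
move=> L_GIO D_diag D_rho; have [[L_lin L_cp _] _] := L_GIO.
have := completely_positive_psd L_cp D_rho (phi_plus C n).
rewrite linear_mapB // (GIO_diag L_GIO D_diag) -/(braket _ _ _) braket_mxB subr_ge0.
by rewrite (braket_phi_plus_diag D_diag).
Qed.

Definition unit_rows U := forall i, (U *m adjmx U) i i = 1.

Lemma unit_rows1 : unit_rows (1%:M : 'M[C]_n).
Proof. by move=> i; rewrite mul1mx adjmxE mxE eqxx conjC1. Qed.

Definition schur_kraus U (l : 'I_n) := diag_mx (\row_a U a l).

Definition schur_channel U X := \sum_l schur_kraus U l *m X *m adjmx (schur_kraus U l).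

Definition schur_value rho U := \sum_i \sum_j (U *m adjmx U) i j * rho i j.

Lemma schur_channelE U X a b : schur_channel U X a b = (U *m adjmx U) a b * X a b.
Proof.
rewrite /schur_channel summxE !mxE mulr_suml; apply: eq_bigr => l _.
by rewrite /schur_kraus adjmx_diag mul_diag_mx mul_mx_diag !mxE mulrAC mulrC.
Qed.

Lemma schur_channel_GIO U : unit_rows U -> GIO (schur_channel U).
Proof.
move=> U_rows; split; last first.
  move=> i; apply/matrixP => a b; rewrite schur_channelE [delta_mx i i a b]mxE.
  have [->|] := eqVneq a i; last by rewrite mulr0.
  by have [->|] := eqVneq b i; rewrite ?U_rows ?mul1r // mulr0.
split.
- by move=> a X Y; apply/matrixP => i j; rewrite !mxE !schur_channelE !mxE mulrDr mulrCA.
- move=> k B B_psd v.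
  under eq_bigr do under eq_bigr do rewrite -/(braket _ _ _) braket_mx_sum.
  under eq_bigr do rewrite exchange_big /=.
  rewrite exchange_big /=; apply: sumr_ge0 => l _.
  under eq_bigr do under eq_bigr do rewrite braket_congr.
  exact: B_psd.
- by move=> X; apply: eq_bigr => i _; rewrite schur_channelE U_rows mul1r.
Qed.

Lemma braket_schur_channel_phi_plus U rho :
  braket (schur_channel U rho) (phi_plus C n) (phi_plus C n) = schur_value rho U / n%:R.
Proof.
rewrite braket_phi_plus; congr (_ / _); apply: eq_bigr => i _.
by apply: eq_bigr => j _; rewrite schur_channelE.
Qed.

Lemma schur_value_real rho U : psd rho -> schur_value rho U \is Num.real.
Proof.
move=> /psd_herm rho_herm.
have S_herm : adjmx (U *m adjmx U) = U *m adjmx U by rewrite adjmx_mul adjmxK.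
rewrite CrealE; apply/eqP; rewrite rmorph_sum [RHS]exchange_big; apply: eq_bigr => i _ /=.
rewrite rmorph_sum; apply: eq_bigr => j _ /=.
by rewrite -[in RHS]rho_herm -[in RHS]S_herm !adjmxE rmorphM.
Qed.

End Channels.

Lemma sum_perturb_sym (R : comPzRingType) n (m : 'I_n -> 'I_n -> R) (e : 'I_n -> R) :
  (forall i j, m i j = m j i) ->
  \sum_i \sum_j ((1 - e i) * (1 - e j) - 1) * m i j
    = \sum_i \sum_j e i * e j * m i j - \sum_i 2 * e i * \sum_j m i j.
Proof.
move=> m_sym.
have swap : \sum_i \sum_j e j * m i j = \sum_i \sum_j e i * m i j.
  by rewrite exchange_big; apply: eq_bigr => i _; apply: eq_bigr => j _; rewrite m_sym.
have -> : \sum_i 2 * e i * \sum_j m i j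
    = \sum_i \sum_j e i * m i j + \sum_i \sum_j e j * m i j.
  rewrite swap -big_split; apply: eq_bigr => i _.
  by rewrite big_distrr -big_split; apply: eq_bigr => j _ /=; ring.
rewrite -big_split -sumrB; apply: eq_bigr => i _.
by rewrite -big_split -sumrB; apply: eq_bigr => j _ /=; ring.
Qed.

Section FirstOrder.
Variable R : rcfType.

Lemma one_sub_sqrt_one_sub (a : R) : 0 <= a <= 1 ->
  let e := 1 - Num.sqrt (1 - a) in [/\ 0 <= e, e <= a & 2 * e = a + e ^+ 2].
Proof.
move=> /andP[a_ge0 a_le1] e.
have s_ge0 := sqrtr_ge0 (1 - a).
have s2 : Num.sqrt (1 - a) ^+ 2 = 1 - a by rewrite sqr_sqrtr // subr_ge0.
have s_le1 : Num.sqrt (1 - a) <= 1 by rewrite -{2}sqrtr1 ler_sqrt //; lra.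
have s2_le : Num.sqrt (1 - a) ^+ 2 <= Num.sqrt (1 - a) by rewrite expr2 ler_piMl.
split; rewrite /e; [lra | lra |].
have -> : (1 - Num.sqrt (1 - a)) ^+ 2 = 1 - 2 * Num.sqrt (1 - a) + Num.sqrt (1 - a) ^+ 2.
  by ring.
lra.
Qed.

Lemma le0_of_le_small (x c t0 : R) : 0 < t0 -> 0 <= c ->
  (forall t, 0 < t -> t <= t0 -> x <= t * c) -> x <= 0.
Proof.
move=> t0_gt0 c_ge0 x_le; apply/ler_addgt0Pr => e e_gt0; rewrite add0r.
have c1_gt0 : 0 < c + 1 by lra.
pose t := Num.min t0 (e / (c + 1)).
have t_gt0 : 0 < t by rewrite lt_min t0_gt0 divr_gt0.
apply: le_trans (x_le t t_gt0 _) _; first by rewrite ge_min lexx.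
apply: le_trans (_ : e / (c + 1) * c <= e); first by rewrite ler_wpM2r // ge_min lexx orbT.
rewrite mulrAC ler_pdivrMr // ler_pM2l //; lra.
Qed.

Lemma sum_sqrt_perturb_ge n (m : 'I_n -> 'I_n -> R) (w : 'I_n -> R) (t : R) :
  (forall i j, m i j = m j i) -> (forall i, 0 <= w i) -> 0 <= t ->
  (forall i, t * w i <= 1) ->
  - t * (\sum_i w i * \sum_j m i j)
    - t ^+ 2 * (\sum_i w i ^+ 2 * `|\sum_j m i j| + \sum_i \sum_j w i * w j * `|m i j|)
  <= \sum_i \sum_j (Num.sqrt (1 - t * w i) * Num.sqrt (1 - t * w j) - 1) * m i j.
Proof.
move=> m_sym w_ge0 t_ge0 tw_le1.
pose e i := 1 - Num.sqrt (1 - t * w i).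
have e_facts i : [/\ 0 <= e i, e i <= t * w i & 2 * e i = t * w i + e i ^+ 2].
  by apply: one_sub_sqrt_one_sub; rewrite tw_le1 mulr_ge0.
have sqrtE i : Num.sqrt (1 - t * w i) = 1 - e i by rewrite /e; ring.
have -> : \sum_i \sum_j (Num.sqrt (1 - t * w i) * Num.sqrt (1 - t * w j) - 1) * m i j
    = \sum_i \sum_j ((1 - e i) * (1 - e j) - 1) * m i j.
  by apply: eq_bigr => i _; apply: eq_bigr => j _; rewrite !sqrtE.
rewrite sum_perturb_sym //.
have -> : \sum_i 2 * e i * \sum_j m i j
    = t * (\sum_i w i * \sum_j m i j) + \sum_i e i ^+ 2 * \sum_j m i j.
  rewrite mulr_sumr -big_split; apply: eq_bigr => i _ /=.
  by have [_ _ ->] := e_facts i; rewrite mulrA -mulrDl.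
have quad_le : \sum_i e i ^+ 2 * \sum_j m i j <= t ^+ 2 * \sum_i w i ^+ 2 * `|\sum_j m i j|.
  rewrite mulr_sumr; apply: ler_sum => i _; have [e_ge0 e_le _] := e_facts i.
  rewrite mulrA -exprMn; apply: le_trans (ler_wpM2l (sqr_ge0 _) (ler_norm _)) _.
  by rewrite ler_wpM2r // ler_pXn2r ?nnegrE ?mulr_ge0.
have cross_ge : - (t ^+ 2 * \sum_i \sum_j w i * w j * `|m i j|)
    <= \sum_i \sum_j e i * e j * m i j.
  rewrite mulr_sumr -sumrN; apply: ler_sum => i _.
  rewrite mulr_sumr -sumrN; apply: ler_sum => j _.
  have [ei_ge0 ei_le _] := e_facts i; have [ej_ge0 ej_le _] := e_facts j.
  rewrite mulrA -mulrN; apply: le_trans (_ : - (e i * e j * `|m i j|) <= _).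
    rewrite mulrN lerN2 ler_wpM2r //.
    by rewrite expr2 mulrACA ler_pM ?mulr_ge0.
  by rewrite -mulrN ler_wpM2l ?mulr_ge0 // lerNl -normrN ler_norm.
lra.
Qed.

Lemma first_order_le n (m : 'I_n -> 'I_n -> R) (w : 'I_n -> R) (q : R) :
  (forall i j, m i j = m j i) -> (forall i, 0 <= w i) ->
  (forall t, 0 < t -> (forall i, t * w i <= 1) ->
     \sum_i \sum_j (Num.sqrt (1 - t * w i) * Num.sqrt (1 - t * w j) - 1) * m i j + t * q <= 0) ->
  q <= \sum_i w i * \sum_j m i j.
Proof.
move=> m_sym w_ge0 perturb_le; rewrite -subr_le0.
set K := \sum_i w i ^+ 2 * `|\sum_j m i j| + \sum_i \sum_j w i * w j * `|m i j|.
have K_ge0 : 0 <= K.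
  by rewrite addr_ge0 ?sumr_ge0 // => i _; rewrite ?sumr_ge0 ?mulr_ge0 ?sqr_ge0 // => j _;
     rewrite !mulr_ge0.
have W_ge0 : 0 <= \sum_i w i by rewrite sumr_ge0.
have W1_gt0 : 0 < 1 + \sum_i w i by lra.
have t0_gt0 : 0 < (1 + \sum_i w i)^-1 by rewrite invr_gt0.
apply: (le0_of_le_small t0_gt0 K_ge0) => t t_gt0 t_le.
have tw_le1 i : t * w i <= 1.
  have w_le : w i <= 1 + \sum_i w i.
    rewrite (bigD1 i) //=; have : 0 <= \sum_(j | j != i) w j by rewrite sumr_ge0.
    lra.
  by rewrite -(mulVf (lt0r_neq0 W1_gt0)); apply: ler_pM => //; exact: ltW.
have := perturb_le t t_gt0 tw_le1.
have := sum_sqrt_perturb_ge m_sym w_ge0 (ltW t_gt0) tw_le1.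
rewrite -/K => lower upper.
rewrite -(ler_pM2l t_gt0) mulrA -expr2 mulrBr; lra.
Qed.

End FirstOrder.

Section ComplexParts.
Local Open Scope complex_scope.
Local Open Scope ring_scope.
Variable R : rcfType.
Implicit Types (a : R) (z : R[i]).

Lemma Re_sum (I : Type) (r : seq I) (F : I -> R[i]) :
  complex.Re (\sum_(i <- r) F i) = \sum_(i <- r) complex.Re (F i).
Proof. exact: (raddf_sum (@complex.Re R : Rcomplex R -> R)). Qed.

Lemma ReD z1 z2 : complex.Re (z1 + z2) = complex.Re z1 + complex.Re z2.
Proof. exact: (raddfD (@complex.Re R : Rcomplex R -> R)). Qed.

Lemma ImD z1 z2 : complex.Im (z1 + z2) = complex.Im z1 + complex.Im z2.
Proof. exact: (raddfD (@complex.Im R : Rcomplex R -> R)). Qed.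

Lemma Re_realM a z : complex.Re (a%:C * z) = a * complex.Re z.
Proof. by case: z => x y /=; rewrite mul0r subr0. Qed.

Lemma Re_conj z : complex.Re z^* = complex.Re z.
Proof. by case: z. Qed.

Lemma conj_realC a : (a%:C)^* = a%:C.
Proof. exact: conjc_real. Qed.

Lemma conjM_realC a z : (a%:C * z)^* = a%:C * z^*.
Proof. by rewrite rmorphM /= conj_realC. Qed.

Definition sqnormc z : R := complex.Re z ^+ 2 + complex.Im z ^+ 2.

Lemma sqnormc_ge0 z : 0 <= sqnormc z.
Proof. by rewrite addr_ge0 ?sqr_ge0. Qed.

Lemma sqnormcE z : (sqnormc z)%:C = z^* * z.
Proof. by rewrite add_Re2_Im2 normCK mulrC. Qed.

Lemma gram_diagE n (U : 'M[R[i]]_n) i : (U *m adjmx U) i i = (\sum_j sqnormc (U i j))%:C.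
Proof.
by rewrite mxE rmorph_sum; apply: eq_bigr => j _; rewrite adjmxE /= sqnormcE mulrC.
Qed.

End ComplexParts.

Section Certificate.
Local Open Scope complex_scope.
Local Open Scope ring_scope.
Variables (R : rcfType) (n : nat) (rho U : 'M[R[i]]_n).
Hypotheses (rho_psd : psd rho) (U_rows : unit_rows U).
Hypothesis U_opt : forall V, unit_rows V ->
  complex.Re (schur_value rho V) <= complex.Re (schur_value rho U).

Local Notation S := (U *m adjmx U).

Definition weight i j := complex.Re (S i j * rho i j).

Lemma weight_sym i j : weight i j = weight j i.
Proof.
have S_herm : adjmx S = S by rewrite adjmx_mul adjmxK.
rewrite /weight -[in RHS](psd_herm rho_psd) -[in RHS]S_herm !adjmxE -Re_conj.
by rewrite rmorphM.
Qed.

Lemma schur_value_perturb_le (c : 'cV[R[i]]_n) (t : R) :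
  0 < t -> (forall i, t * sqnormc (c i 0) <= 1) ->
  \sum_i \sum_j (Num.sqrt (1 - t * sqnormc (c i 0)) * Num.sqrt (1 - t * sqnormc (c j 0)) - 1)
     * weight i j + t * complex.Re (braket rho c c) <= 0.
Proof.
move=> t_gt0 tc_le1.
pose a i := Num.sqrt (1 - t * sqnormc (c i 0)).
pose A : 'M[R[i]]_n := diag_mx (\row_i (a i)%:C).
pose beta : 'cV[R[i]]_n := \col_i ((Num.sqrt t)%:C * (c i 0)^*).
pose P := A *m S *m adjmx A + beta *m adjmx beta.
have PE i j : P i j = (a i * a j)%:C * S i j + t%:C * ((c i 0)^* * c j 0).
  have tE : t%:C = (Num.sqrt t)%:C * (Num.sqrt t)%:C by rewrite -rmorphM -expr2 sqr_sqrtr ?ltW.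
  rewrite /P /A adjmx_diag mul_diag_mx mul_mx_diag !mxE big_ord1 adjmxE !mxE.
  by rewrite (conj_realC (a j)) conjM_realC conjCK tE rmorphM; ring.
have [B [B_psd BB]] := psd_sqrt_exists (psdD (psd_congr A (psd_gram U)) (psd_gram beta)).
have BBt : B *m adjmx B = P by rewrite (psd_herm B_psd).
have B_rows : unit_rows B.
  move=> i; rewrite BBt PE U_rows mulr1 -sqnormcE -!rmorphM -rmorphD -expr2 sqr_sqrtr.
    by rewrite subrK.
  by rewrite subr_ge0.
rewrite [leLHS](_ : _ = complex.Re (schur_value rho B) - complex.Re (schur_value rho U)).
  by rewrite subr_le0 U_opt.
rewrite /schur_value BBt braketE !Re_sum -sumrB mulr_sumr -big_split; apply: eq_bigr => i _ /=.
rewrite !Re_sum -sumrB mulr_sumr -big_split; apply: eq_bigr => j _ /=.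
have -> : P i j * rho i j
    = (a i * a j)%:C * (S i j * rho i j) + t%:C * ((c i 0)^* * rho i j * c j 0).
  by rewrite PE; ring.
by rewrite ReD !Re_realM /weight /a; ring.
Qed.

Lemma schur_optimum_certificate :
  exists D, [/\ is_diag_mx D, psd (D - rho) & \tr D = schur_value rho U].
Proof.
pose y i := \sum_j weight i j.
exists (diag_mx (\row_i (y i)%:C)); split; first exact: diag_mx_is_diag.
  move=> c; have q_real : braket rho c c \is Num.real := ger0_real (rho_psd c).
  rewrite -/(braket _ c c) braket_mxB braket_diag -(RRe_real q_real).
  have -> : \sum_i (c i 0)^* * (\row_i (y i)%:C) 0 i * c i 0
      = (\sum_i sqnormc (c i 0) * y i)%:C.
    by rewrite rmorph_sum; apply: eq_bigr => i _; rewrite mxE rmorphM /= sqnormcE; ring.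
  rewrite -rmorphB ler0c subr_ge0.
  apply: first_order_le weight_sym (fun i => sqnormc_ge0 _) _ => t.
  exact: schur_value_perturb_le.
rewrite mxtrace_diag -(RRe_real (schur_value_real U rho_psd)) /schur_value Re_sum rmorph_sum.
by apply: eq_bigr => i _; rewrite mxE Re_sum.
Qed.

End Certificate.

Section Compactness.
Local Open Scope complex_scope.
Local Open Scope ring_scope.
Local Open Scope classical_set_scope.
Variables (R : realType) (n : nat).
Local Notation N := (n * n + n * n)%N.

(* Real and imaginary parts as real coordinates, so that compactness in
   ['rV[R]_N] applies. *)
Definition mx_of_coords (x : 'rV[R]_N) : 'M[R[i]]_n :=
  \matrix_(i, j) (vec_mx (lsubmx x) i j +i* vec_mx (rsubmx x) i j).

Definition coords_of_mx (U : 'M[R[i]]_n) : 'rV[R]_N :=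
  row_mx (mxvec (map_mx (@complex.Re R) U)) (mxvec (map_mx (@complex.Im R) U)).

Lemma coords_of_mxK : cancel coords_of_mx mx_of_coords.
Proof.
move=> U; apply/matrixP => i j.
rewrite /mx_of_coords /coords_of_mx row_mxKl row_mxKr !mxvecK !mxE.
by case: (U i j).
Qed.

Definition continuousC (f : 'rV[R]_N -> R[i]) :=
  continuous (fun x => complex.Re (f x)) /\ continuous (fun x => complex.Im (f x)).

Lemma continuousC_cst c : continuousC (fun _ => c).
Proof. by split => x; apply: cst_continuous. Qed.

Lemma continuousCD f g : continuousC f -> continuousC g -> continuousC (fun x => f x + g x).
Proof.
move=> [f_re f_im] [g_re g_im]; split => x.
  by under eq_fun do [rewrite ReD]; exact: cvgD (f_re x) (g_re x).
by under eq_fun do [rewrite ImD]; exact: cvgD (f_im x) (g_im x).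
Qed.

Lemma continuousCM f g : continuousC f -> continuousC g -> continuousC (fun x => f x * g x).
Proof.
move=> [f_re f_im] [g_re g_im]; split => x.
  have -> : (fun x => complex.Re (f x * g x)) = (fun x =>
      complex.Re (f x) * complex.Re (g x) - complex.Im (f x) * complex.Im (g x)).
    by apply: funext => y; case: (f y) => ? ?; case: (g y).
  exact: cvgB (cvgM (f_re x) (g_re x)) (cvgM (f_im x) (g_im x)).
have -> : (fun x => complex.Im (f x * g x)) = (fun x =>
    complex.Re (f x) * complex.Im (g x) + complex.Im (f x) * complex.Re (g x)).
  by apply: funext => y; case: (f y) => ? ?; case: (g y) => ? ? /=; rewrite addrC.
exact: cvgD (cvgM (f_re x) (g_im x)) (cvgM (f_im x) (g_re x)).
Qed.

Lemma continuousCJ f : continuousC f -> continuousC (fun x => (f x)^*).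
Proof.
move=> [f_re f_im]; split => x.
  have -> : (fun x => complex.Re (f x)^*) = (fun x => complex.Re (f x)).
    by apply: funext => y; case: (f y).
  exact: f_re.
have -> : (fun x => complex.Im (f x)^*) = (fun x => - complex.Im (f x)).
  by apply: funext => y; case: (f y).
exact: cvgN (f_im x).
Qed.

Lemma continuousC_sum (I : Type) (r : seq I) (F : I -> 'rV[R]_N -> R[i]) :
  (forall i, continuousC (F i)) -> continuousC (fun x => \sum_(i <- r) F i x).
Proof.
move=> F_cont; elim: r => [|a r IHr].
  by under eq_fun do [rewrite big_nil]; exact: continuousC_cst.
by under eq_fun do [rewrite big_cons]; exact: continuousCD.
Qed.

Lemma continuousC_entry i j : continuousC (fun x => mx_of_coords x i j).
Proof.
split.
  have -> : (fun x => complex.Re (mx_of_coords x i j))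
      = (fun x : 'rV[R]_N => x ord0 (lshift _ (mxvec_index i j))).
    by apply: funext => y; rewrite !mxE.
  exact: coord_continuous.
have -> : (fun x => complex.Im (mx_of_coords x i j))
    = (fun x : 'rV[R]_N => x ord0 (rshift _ (mxvec_index i j))).
  by apply: funext => y; rewrite !mxE.
exact: coord_continuous.
Qed.

Lemma continuousC_gram i j :
  continuousC (fun x => (mx_of_coords x *m adjmx (mx_of_coords x)) i j).
Proof.
under eq_fun do rewrite mxE; apply: continuousC_sum => k.
under eq_fun do rewrite adjmxE.
by apply: continuousCM; [|apply: continuousCJ]; exact: continuousC_entry.
Qed.

Lemma continuousC_schur_value rho : continuousC (fun x => schur_value rho (mx_of_coords x)).
Proof.
apply: continuousC_sum => i; apply: continuousC_sum => j.
by apply: continuousCM; [exact: continuousC_gram | exact: continuousC_cst].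
Qed.

Definition unit_rows_coords :=
  [set x | forall i, complex.Re ((mx_of_coords x *m adjmx (mx_of_coords x)) i i) = 1].

Lemma unit_rows_coordsP x : unit_rows_coords x <-> unit_rows (mx_of_coords x).
Proof.
split=> x_rows i; last by rewrite x_rows.
by have := x_rows i; rewrite gram_diagE /= => ->.
Qed.

Lemma closed_unit_rows_coords : closed unit_rows_coords.
Proof.
have -> : unit_rows_coords = \bigcap_(i in setT)
    ((fun x => complex.Re ((mx_of_coords x *m adjmx (mx_of_coords x)) i i)) @^-1` [set 1]).
  by apply/seteqP; split => x /= x_rows i; [move=> _; exact: x_rows | exact: x_rows i I].
apply: closed_bigI => i _; apply: preimage_closed; last exact: closed_eq.
by move=> y _; exact: (continuousC_gram i i).1.
Qed.

Lemma unit_rows_coords_le1 x k : unit_rows_coords x -> `|x ord0 k| <= 1.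
Proof.
move=> x_rows; set U := mx_of_coords x.
have entry_le1 i j : complex.Re (U i j) ^+ 2 + complex.Im (U i j) ^+ 2 <= 1.
  rewrite -(x_rows i) gram_diagE /= (bigD1 j) //= lerDl.
  by apply: sumr_ge0 => l _; exact: sqnormc_ge0.
have norm_le1 (a b : R) : a ^+ 2 + b ^+ 2 <= 1 -> `|a| <= 1.
  move=> ab_le1; rewrite -(expr_le1 (n := 2)) // real_normK ?num_real //.
  by apply: le_trans ab_le1; rewrite lerDl sqr_ge0.
rewrite -(splitK k); case: (split k) => a /=; case: (mxvec_indexP a) => i j.
  by have := entry_le1 i j; rewrite !mxE => /norm_le1.
by have := entry_le1 i j; rewrite addrC !mxE => /norm_le1.
Qed.

Lemma compact_unit_rows_coords : compact unit_rows_coords.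
Proof.
apply: bounded_closed_compact closed_unit_rows_coords; exists 1; split; first exact: num_real.
move=> M M_gt1 x x_rows /=; apply: le_trans (ltW M_gt1).
rewrite /Num.norm /= mx_normrE; elim/big_ind: _ => //.
  by move=> a b a_le b_le; rewrite ge_max a_le b_le.
by move=> [i j] _ /=; rewrite ord1; exact: unit_rows_coords_le1.
Qed.

Lemma schur_value_max_exists (rho : 'M[R[i]]_n) : exists2 U, unit_rows U &
  forall V, unit_rows V -> complex.Re (schur_value rho V) <= complex.Re (schur_value rho U).
Proof.
have coords_rows V : unit_rows V -> unit_rows_coords (coords_of_mx V).
  by move=> V_rows; apply/unit_rows_coordsP; rewrite coords_of_mxK.
have [|x x_rows x_max] := compact_EVT_max _ compact_unit_rows_coords
    (continuous_subspaceT (continuousC_schur_value rho).1).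
  by exists (coords_of_mx 1%:M); apply: coords_rows; exact: unit_rows1.
exists (mx_of_coords x); first by apply/unit_rows_coordsP; rewrite inE in x_rows.
by move=> V V_rows; rewrite -{1}(coords_of_mxK V); apply: x_max; rewrite inE; exact: coords_rows.
Qed.

End Compactness.

Section Robustness.
Variables (C : numClosedFieldType) (n : nat).
Implicit Types (rho D : 'M[C]_n).

Lemma is_diag_mxZ a D : is_diag_mx D -> is_diag_mx (a *: D).
Proof. by move=> /is_diag_mxP D_diag; apply/is_diag_mxP => i j ij; rewrite mxE D_diag ?mulr0. Qed.

Lemma density_dim_gt0 rho : density rho -> (0 < n)%N.
Proof.
by case: n rho => // rho [_]; rewrite /mxtrace big_ord0 => /eqP; rewrite eq_sym oner_eq0.
Qed.

Lemma robustness_feasibleP rho s : density rho ->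
  robustness_feasible rho s <-> exists D, [/\ is_diag_mx D, psd (D - rho) & \tr D = 1 + s].
Proof.
move=> [rho_psd rho_tr]; split.
  move=> [s_ge0 [tau [[tau_psd tau_tr] [_ mix_diag]]]].
  exists (rho + s *: tau); split; last by rewrite mxtraceD mxtraceZ rho_tr tau_tr mulr1.
    have s1_neq0 : 1 + s != 0 by rewrite lt0r_neq0 // ltr_pwDl.
    by rewrite -[_ + _]scale1r -(mulfV s1_neq0) -scalerA; exact: is_diag_mxZ.
  by rewrite addrC addKr; exact: psdZ.
move=> [D [D_diag D_rho D_tr]].
have trB : \tr (D - rho) = s by rewrite raddfB /= D_tr rho_tr addrC addKr.
have s_ge0 : 0 <= s by rewrite -trB psd_tr_ge0.
have [tau tau_dens tauE] : exists2 tau, density tau & rho + s *: tau = D.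
  have [s0|s_neq0] := eqVneq s 0.
    exists rho => //; rewrite s0 scale0r addr0.
    by apply/eqP; rewrite eq_sym -subr_eq0; apply/eqP/psd_tr_eq0; rewrite // trB.
  exists (s^-1 *: (D - rho)); last by rewrite scalerA mulfV // scale1r addrC subrK.
  split; first by apply: psdZ; rewrite ?invr_ge0.
  by rewrite mxtraceZ trB mulVf.
split=> //; exists tau; split=> //; rewrite tauE; split; last exact: is_diag_mxZ.
split; last by rewrite mxtraceZ D_tr mulVf // lt0r_neq0 // ltr_pwDl.
apply: psdZ; first by rewrite invr_ge0 addr_ge0.
by rewrite -(subrK rho D); apply: psdD.
Qed.

End Robustness.

Theorem theorem2 (R : realType) (d : nat) (rho : 'M[R[i]]_d) :
  density rho ->
  exists s : R[i],
    is_robustness rho s /\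
    (exists L : 'M[R[i]]_d -> 'M[R[i]]_d,
        GIO L /\ fidelity (L rho) (Phi_plus R[i] d) = normalized_robustness d s) /\
    (forall L : 'M[R[i]]_d -> 'M[R[i]]_d,
        GIO L -> fidelity (L rho) (Phi_plus R[i] d) <= normalized_robustness d s).
Proof.
move=> rho_dens; have [rho_psd _] := rho_dens.
have [U U_rows U_max] := schur_value_max_exists rho.
have [D [D_diag D_rho D_tr]] := schur_optimum_certificate rho_psd U_rows U_max.
have fidelityE L : GIO L ->
    fidelity (L rho) (Phi_plus _ d) = braket (L rho) (phi_plus _ d) (phi_plus _ d).
  by move=> [[_ L_cp _] _]; apply: fidelity_rank1; exact: completely_positive_psd.
exists (\tr D - 1); rewrite /normalized_robustness subrKC; split; [split | split].
- by apply/(robustness_feasibleP _ rho_dens); exists D; rewrite subrKC.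
- move=> s /(robustness_feasibleP _ rho_dens)[D' [D'_diag D'_rho D'_tr]].
  have := GIO_braket_phi_plus_le (schur_channel_GIO U_rows) D'_diag D'_rho.
  rewrite braket_schur_channel_phi_plus -D_tr D'_tr ler_pM2r ?invr_gt0 ?ltr0n.
    by rewrite lerBlDl.
  exact: density_dim_gt0 rho_dens.
- exists (schur_channel U); have U_GIO := schur_channel_GIO U_rows.
  by rewrite fidelityE // braket_schur_channel_phi_plus D_tr.
- by move=> L L_GIO; rewrite fidelityE //; exact: GIO_braket_phi_plus_le.
Qed.
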